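(* For all $n\geq1$ and all formulas $\phi,\chi_1,\dots,\chi_n\in\mathcal{L}(\nabla,\bullet)$, $$\vdash_{\mathbf{K}^{\nabla\bullet}}\Delta\Big(\bigwedge_{k=1}^n\chi_k\to\phi\Big)\land\bigwedge_{k=1}^n\circ(\neg\phi\to\chi_k)\land\phi\to\Delta\phi.$$
   Context: $\mathcal{L}(\nabla,\bullet)$: $\phi::=p\mid\neg\phi\mid\phi\land\phi\mid\nabla\phi\mid\bullet\phi$ over a nonempty set of propositional variables; $\Delta\phi:=\neg\nabla\phi$, $\circ\phi:=\neg\bullet\phi$. The Hilbert system $\mathbf{K}^{\nabla\bullet}$ has axioms: A0 all instances of propositional tautologies; A1 $\bullet\phi\to\phi$; A2 $\nabla\phi\leftrightarrow\nabla\neg\phi$; A3 $\bullet(\psi\to\phi)\land\phi\to\bullet\phi$; A4 $\nabla(\phi\land\psi)\to\nabla\phi\vee\nabla\psi$; A5 $\bullet(\phi\land\psi)\to\bullet\phi\vee\bullet\psi$; A6 $\nabla\phi\to\bullet\phi\vee\bullet\neg\phi$; A7 $\bullet(\phi\to\psi)\land\bullet(\neg\phi\to\chi)\to\nabla\phi$; and rules: R1 from $\phi$ infer $\Delta\phi$; R2 from $\phi$ infer $\circ\phi$; R3 from $\phi\leftrightarrow\psi$ infer $\Delta\phi\leftrightarrow\Delta\psi$; R4 from $\phi\leftrightarrow\psi$ infer $\circ\phi\leftrightarrow\circ\psi$; MP. *)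

From Stdlib Require Import List Arith.

Inductive form : Type :=
| Var : nat -> form
| Neg : form -> form
| And : form -> form -> form
| Nab : form -> form      (* nabla : non-contingency-negated, i.e. contingency *)
| Bul : form -> form.

Definition Or (a b : form) : form := Neg (And (Neg a) (Neg b)).
Definition Imp (a b : form) : form := Neg (And a (Neg b)).
Definition Iff (a b : form) : form := And (Imp a b) (Imp b a).
Definition Del (a : form) : form := Neg (Nab a).
Definition Circ (a : form) : form := Neg (Bul a).

Fixpoint peval (v : form -> bool) (f : form) : bool :=
  match f with
  | Var _ => v f
  | Neg a => negb (peval v a)
  | And a b => andb (peval v a) (peval v b)
  | Nab _ => v f
  | Bul _ => v f
  end.

(* Instances of propositional tautologies: modal subformulas (and variables)
   are treated as atoms. *)
Definition taut (f : form) : Prop := forall v : form -> bool, peval v f = true.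

Inductive derivable : form -> Prop :=
| A0 : forall f, taut f -> derivable f
| A1 : forall p, derivable (Imp (Bul p) p)
| A2 : forall p, derivable (Iff (Nab p) (Nab (Neg p)))
| A3 : forall p q, derivable (Imp (And (Bul (Imp q p)) p) (Bul p))
| A4 : forall p q, derivable (Imp (Nab (And p q)) (Or (Nab p) (Nab q)))
| A5 : forall p q, derivable (Imp (Bul (And p q)) (Or (Bul p) (Bul q)))
| A6 : forall p, derivable (Imp (Nab p) (Or (Bul p) (Bul (Neg p))))
| A7 : forall p q r,
    derivable (Imp (And (Bul (Imp p q)) (Bul (Imp (Neg p) r))) (Nab p))
| R1 : forall p, derivable p -> derivable (Del p)
| R2 : forall p, derivable p -> derivable (Circ p)
| R3 : forall p q, derivable (Iff p q) -> derivable (Iff (Del p) (Del q))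
| R4 : forall p q, derivable (Iff p q) -> derivable (Iff (Circ p) (Circ q))
| MP : forall p q, derivable (Imp p q) -> derivable p -> derivable q.

Fixpoint bigAnd_from (f : nat -> form) (k m : nat) : form :=
  match m with
  | 0 => f k               (* degenerate; not used *)
  | 1 => f k
  | S m' => And (f k) (bigAnd_from f (S k) m')
  end.

Definition bigAnd (f : nat -> form) (n : nat) : form := bigAnd_from f 1 n.

From Stdlib Require Import List Arith Bool.

(* Write X for the conjunction of the chi k and C for the conjunction of the
   (~phi -> chi k), so that C is propositionally equivalent to phi \/ X.  By A5
   the circ-premises refute the accident of C, and since phi makes C true, A1
   refutes the accident of ~C; so by A6 C is non-contingent, hence so is X \/ phi
   (R3).  With Delta (X -> phi), axiom A4 makes (X -> phi) /\ (X \/ phi), which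
   is equivalent to phi, non-contingent. *)

Ltac peval_cases :=
  repeat match goal with
         | |- context [?v ?x] =>
             match type of v with form -> bool => destruct (v x) end
         | |- context [peval ?v ?x] => destruct (peval v x)
         end; reflexivity.

Lemma derivable_taut_mp (a b : form) :
  derivable a -> taut (Imp a b) -> derivable b.
Proof. intros Ha Hab. exact (MP a b (A0 _ Hab) Ha). Qed.

Lemma derivable_And (a b : form) :
  derivable a -> derivable b -> derivable (And a b).
Proof.
  intros Ha Hb. apply (MP b); [| exact Hb].
  apply (MP a); [| exact Ha].
  apply A0. intro v. simpl. peval_cases.
Qed.

Lemma Del_congr_taut (a b : form) : taut (Iff a b) -> derivable (Iff (Del a) (Del b)).
Proof. intro H. exact (R3 a b (A0 _ H)). Qed.

Lemma Bul_bigAnd_from_Circ (psi : nat -> form) (m k : nat) :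
  derivable (Neg (And (Bul (bigAnd_from psi k m))
                      (bigAnd_from (fun j => Circ (psi j)) k m))).
Proof.
  revert k; induction m as [| [| m] IH]; intro k.
  - apply A0. intro v. simpl. peval_cases.
  - apply A0. intro v. simpl. peval_cases.
  - change (derivable (Neg (And (Bul (And (psi k) (bigAnd_from psi (S k) (S m))))
              (And (Circ (psi k)) (bigAnd_from (fun j => Circ (psi j)) (S k) (S m)))))).
    apply (derivable_taut_mp _ _
             (derivable_And _ _ (IH (S k)) (A5 (psi k) (bigAnd_from psi (S k) (S m))))).
    intro v. simpl. peval_cases.
Qed.

Lemma peval_bigAnd_from_Imp_Neg (v : form -> bool) (phi : form) (chi : nat -> form)
    (m k : nat) :
  peval v (bigAnd_from (fun j => Imp (Neg phi) (chi j)) k m)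
  = peval v phi || peval v (bigAnd_from chi k m).
Proof.
  revert k; induction m as [| [| m] IH]; intro k.
  - simpl. peval_cases.
  - simpl. peval_cases.
  - change (peval v (And (Imp (Neg phi) (chi k))
              (bigAnd_from (fun j => Imp (Neg phi) (chi j)) (S k) (S m)))
            = peval v phi || peval v (And (chi k) (bigAnd_from chi (S k) (S m)))).
    cbn [peval]. rewrite IH. simpl. peval_cases.
Qed.

Lemma Del_of_Del_Imp_Del_Or (x phi : form) :
  derivable (Imp (And (Del (Imp x phi)) (Del (Or x phi))) (Del phi)).
Proof.
  assert (phi_iff : derivable (Iff (Del phi) (Del (And (Imp x phi) (Or x phi))))).
  { apply Del_congr_taut. intro v. simpl. peval_cases. }
  apply (derivable_taut_mp _ _ (derivable_And _ _ phi_iff (A4 (Imp x phi) (Or x phi)))).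
  intro v. simpl. peval_cases.
Qed.

Lemma Bul_of_Nab_true (c : form) : derivable (Imp (And c (Nab c)) (Bul c)).
Proof.
  apply (derivable_taut_mp _ _ (derivable_And _ _ (A6 c) (A1 (Neg c)))).
  intro v. simpl. peval_cases.
Qed.

Lemma Del_of_Del_Imp_not_Bul (phi x c circs : form) :
  (forall v, peval v c = peval v phi || peval v x) ->
  derivable (Neg (And (Bul c) circs)) ->
  derivable (Imp (And (And (Del (Imp x phi)) circs) phi) (Del phi)).
Proof.
  intros c_iff not_Bul_c.
  assert (Del_Or_iff : derivable (Iff (Del (Or x phi)) (Del c))).
  { apply Del_congr_taut. intro v. simpl. rewrite c_iff. peval_cases. }
  apply (derivable_taut_mp _ _
           (derivable_And _ _ (Del_of_Del_Imp_Del_Or x phi)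
              (derivable_And _ _ Del_Or_iff
                 (derivable_And _ _ (Bul_of_Nab_true c) not_Bul_c)))).
  intro v. simpl. rewrite !c_iff. peval_cases.
Qed.

Theorem proposition8 (n : nat) (phi : form) (chi : nat -> form) :
  1 <= n ->
  derivable
    (Imp (And (And (Del (Imp (bigAnd chi n) phi))
                   (bigAnd (fun k => Circ (Imp (Neg phi) (chi k))) n))
              phi)
         (Del phi)).
Proof.
  intros _.
  apply (Del_of_Del_Imp_not_Bul phi (bigAnd chi n)
           (bigAnd (fun k => Imp (Neg phi) (chi k)) n)).
  - intro v. apply peval_bigAnd_from_Imp_Neg.
  - apply Bul_bigAnd_from_Circ.
Qed.
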